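(* Let $n\ge 3$ and let $\mathcal T$ be an admissible family of arcs with endpoints in $[n]$. Then the vectors $\{e_i-e_j : [i,j)\in\mathcal T\}\subset\mathbb{R}^n$ are affinely independent, and their convex hull is a non-degenerate simplex contained in the boundary of $Root_n$. Consequently, the map $\phi_n:|\mathcal K_n|\to\mathbb{R}^n$ is injective on each simplex and maps each simplex into $\partial(Root_n)$.
   Context: Identify $[n]$ with the vertices of a regular $n$-gon in $S^1$, labelled counterclockwise, with counterclockwise order $\preceq$; for $a\ne b\in[n]$, $[a,b)=\{z\in S^1:a\preceq z\prec b\}$. A finite collection of such arcs is admissible if any two distinct members $I,J$ are either intersecting and strictly nested, or disjoint with the sink of neither equal to the source of the other. $\mathcal K_n$ is the simplicial complex on the $n(n-1)$ arcs $[i,j)$, $i\neq j$, whose simplices are the nonempty admissible families. $\{e_i\}$ is the standard basis of $\mathbb{R}^n$, $Root_n=\mathrm{Conv}\{e_i-e_j:1\le i\ne j\le n\}$, a polytope of dimension $n-1$ in $H_0=\{x:\sum x_i=0\}$; its boundary is taken relative to $H_0$. $\phi_n:|\mathcal K_n|\to\mathbb{R}^n$ is the map that is affine on each simplex and sends the vertex $[i,j)$ to $e_i-e_j$. *)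

(* Real coefficients: an arbitrary realFieldType R
   (the statement over R = the real numbers is an instance). *)
From HB Require Import structures.
From mathcomp Require Import all_boot all_order all_algebra.
Set Implicit Arguments. Unset Strict Implicit. Unset Printing Implicit Defensive.
Import Order.TTheory GRing.Theory Num.Theory.

Local Open Scope ring_scope.

(* The vertices [n] of the regular n-gon are 'I_n, labelled counterclockwise
   (vertex k+1 of the paper is k here).  An arc [a,b) (a <> b) is encoded by
   the pair (a,b). *)

(* [a,b) as a subset of S^1 is the union of the unit half-open edges [k,k+1)
   for the vertices k with a <= k < b in counterclockwise order starting at a;
   hence set-theoretic relations between arcs are exactly those between their
   vertex sets {a, a+1, ..., b-1} (mod n). *)
Definition arc_vertices (n : nat) (a b : 'I_n) : {set 'I_n} :=
  [set z : 'I_n | ((z + n - a) %% n < (b + n - a) %% n)%N].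

Definition source (n : nat) (I : 'I_n * 'I_n) : 'I_n := I.1.
Definition sink (n : nat) (I : 'I_n * 'I_n) : 'I_n := I.2.

Definition is_arc (n : nat) (I : 'I_n * 'I_n) : Prop := I.1 <> I.2.

Definition compatible_arcs (n : nat) (I J : 'I_n * 'I_n) : Prop :=
  let SI := arc_vertices I.1 I.2 in
  let SJ := arc_vertices J.1 J.2 in
  ( SI :&: SJ != set0 /\ (SI \proper SJ \/ SJ \proper SI) )
  \/ ( SI :&: SJ = set0 /\ sink I <> source J /\ sink J <> source I ).

Definition admissible (n : nat) (T : {set 'I_n * 'I_n}) : Prop :=
  (forall I, I \in T -> is_arc I) /\
  (forall I J, I \in T -> J \in T -> I <> J -> compatible_arcs I J).

Definition arcvec (R : realFieldType) (n : nat) (I : 'I_n * 'I_n) : 'rV[R]_n :=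
  \row_k (((k == I.1)%:R : R) - (k == I.2)%:R).

Definition affinely_independent (R : realFieldType) (n : nat) (I : finType)
  (A : {set I}) (v : I -> 'rV[R]_n) : Prop :=
  forall c : I -> R,
    \sum_(i in A) c i = 0 -> \sum_(i in A) c i *: v i = 0 ->
    forall i, i \in A -> c i = 0.

Definition barycentric (R : realFieldType) (I : finType) (A : {set I}) (c : I -> R) : Prop :=
  (forall i, i \in A -> 0 <= c i) /\ \sum_(i in A) c i = 1.

Definition conv (R : realFieldType) (n : nat) (I : finType)
  (A : {set I}) (v : I -> 'rV[R]_n) (x : 'rV[R]_n) : Prop :=
  exists c : I -> R, barycentric A c /\ x = \sum_(i in A) c i *: v i.

Definition H0 (R : realFieldType) (n : nat) (x : 'rV[R]_n) : Prop :=
  \sum_k x 0 k = 0.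

Definition Root (R : realFieldType) (n : nat) (x : 'rV[R]_n) : Prop :=
  conv [set I : 'I_n * 'I_n | I.1 != I.2] (@arcvec R n) x.

(* topology of H_0 (sup-norm balls; all norms are equivalent) *)
Definition rel_interior (R : realFieldType) (n : nat) (P : 'rV[R]_n -> Prop)
  (x : 'rV[R]_n) : Prop :=
  H0 x /\ exists2 eps : R, 0 < eps &
    forall y : 'rV[R]_n, H0 y -> (forall k, `|y 0 k - x 0 k| < eps) -> P y.

Definition rel_closure (R : realFieldType) (n : nat) (P : 'rV[R]_n -> Prop)
  (x : 'rV[R]_n) : Prop :=
  H0 x /\ forall eps : R, 0 < eps ->
    exists y : 'rV[R]_n, P y /\ forall k, `|y 0 k - x 0 k| < eps.

Definition rel_boundary (R : realFieldType) (n : nat) (P : 'rV[R]_n -> Prop)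
  (x : 'rV[R]_n) : Prop :=
  rel_closure P x /\ ~ rel_interior P x.

From HB Require Import structures.
From mathcomp Require Import all_boot all_order all_algebra.
From mathcomp Require Import zify lra.
Set Implicit Arguments.
Unset Strict Implicit.
Unset Printing Implicit Defensive.
Import Order.TTheory GRing.Theory Num.Theory.

(* Independence: among the arcs with a nonzero coefficient take a shortest one,
   I.  By the nesting conditions, the family cannot contain both a longer arc
   with the source of I and a longer arc with the sink of I; and a sink is
   never a source.  So the coordinate at the source (or at the sink) of I only
   sees the term of I, and its coefficient vanishes.
   Boundary: let s_k be 1 if k is a source of an arc of T and -1 otherwise.
   The linear form <s, .> is at most 2 on Root_n and equals 2 on every
   e_i - e_j with [i,j) in T, so it supports Root_n along the simplex; moving
   off the simplex in the direction of an arc of T leaves Root_n. *)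

Section CircularArcs.
Variable n : nat.
Implicit Types a b c d z : 'I_n.

Definition on_arc (a b z : nat) : Prop :=
  ((a <= z /\ z < b) \/ (b < a /\ (a <= z \/ z < b)))%N.

Lemma mem_arc_vertices a b z : z \in arc_vertices a b <-> on_arc a b z.
Proof.
have mod_shift x y : (x < n -> y < n ->
    (x + n - y) %% n = if y <= x then x - y else x + n - y)%N.
  move=> lxn lyn; case: leqP => lyx; last by rewrite modn_small //; lia.
  by rewrite (_ : x + n - y = x - y + n)%N ?modnDr ?modn_small //; lia.
rewrite inE !mod_shift //; have := ltn_ord a; have := ltn_ord b; have := ltn_ord z.
by rewrite /on_arc; case: (leqP a z); case: (leqP a b); split; lia.
Qed.

Lemma ord_predP z : ((z = 0 :> nat /\ ord_pred z = n.-1 :> nat) \/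
  (0 < z /\ ord_pred z = z.-1 :> nat))%N.
Proof.
case: z => -[|m] lmn /=; [left | right]; first by rewrite add0n modn_small //; lia.
by rewrite modnDr modn_small //; lia.
Qed.

Lemma val_neq a b : a != b -> (a : nat) <> b.
Proof. by move=> /eqP nab /val_inj. Qed.

Ltac arc_lia := rewrite ?mem_arc_vertices /on_arc; lia.

Lemma source_in_arc a b : a != b -> a \in arc_vertices a b.
Proof. move=> /val_neq; have := ltn_ord a; have := ltn_ord b; arc_lia. Qed.

Lemma sink_notin_arc a b : b \notin arc_vertices a b.
Proof. by apply/negP; arc_lia. Qed.

Lemma pred_sink_in_arc a b : a != b -> ord_pred b \in arc_vertices a b.
Proof.
move=> /val_neq; have := ord_predP b; have := ltn_ord a; have := ltn_ord b.
arc_lia.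
Qed.

Lemma pred_source_notin_arc a c : a != c -> ord_pred a \notin arc_vertices a c.
Proof.
move=> /val_neq nac; apply/negP; have := ord_predP a; have := ltn_ord a.
have := ltn_ord c; arc_lia.
Qed.

Lemma arc_succ_closed a b c :
  b != c -> ord_pred b \in arc_vertices a c -> b \in arc_vertices a c.
Proof.
move=> /val_neq; have := ord_predP b; have := ltn_ord a; have := ltn_ord b.
have := ltn_ord c; arc_lia.
Qed.

Lemma arc_pred_closed a b d :
  d != a -> a \in arc_vertices d b -> ord_pred a \in arc_vertices d b.
Proof.
move=> /val_neq; have := ord_predP a; have := ltn_ord a; have := ltn_ord b.
have := ltn_ord d; arc_lia.
Qed.

Definition arc_set (I : 'I_n * 'I_n) : {set 'I_n} := arc_vertices I.1 I.2.

Lemma compatible_arcs_nested I J z : compatible_arcs I J ->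
  z \in arc_set I -> z \in arc_set J ->
  arc_set I \proper arc_set J \/ arc_set J \proper arc_set I.
Proof.
case=> [[_ nested] | [disjoint _]] zI zJ //.
have : z \in arc_set I :&: arc_set J by apply/setIP.
by rewrite /arc_set disjoint inE.
Qed.

Lemma compatible_arcs_longer I J z : compatible_arcs I J ->
  z \in arc_set I -> z \in arc_set J -> (#|arc_set I| <= #|arc_set J|)%N ->
  arc_set I \proper arc_set J.
Proof.
move=> cIJ zI zJ; case: (compatible_arcs_nested cIJ zI zJ) => // /proper_card.
by rewrite ltnNge => /negPf ->.
Qed.

Section Admissible.
Variable T : {set 'I_n * 'I_n}.
Hypothesis admT : admissible T.

Lemma admissible_arc I : I \in T -> I.1 != I.2.
Proof. by move=> IT; apply/eqP; exact: admT.1. Qed.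

Lemma admissible_compatible I J : I \in T -> J \in T -> I != J ->
  compatible_arcs I J.
Proof. by move=> IT JT /eqP; exact: admT.2. Qed.

Lemma admissible_sink_neq_source I J : I \in T -> J \in T -> I.2 != J.1.
Proof.
case: I J => a b [b' c] IT JT; apply/eqP => /= ebb; subst b'.
have nab := admissible_arc IT; have nbc := admissible_arc JT; rewrite /= in nab nbc.
have nIJ : (a, b) != (b, c) by apply: contraNneq nab => -[->].
case: (admissible_compatible IT JT nIJ) => [[_ [IJ | JI]] | [_ [sink_source _]]] //.
- have := subsetP (proper_sub IJ) _ (pred_sink_in_arc nab).
  by rewrite /arc_set /= (negPf (pred_source_notin_arc nbc)).
- have := subsetP (proper_sub JI) _ (source_in_arc nbc).
  by rewrite /arc_set /= (negPf (sink_notin_arc _ _)).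
Qed.

Lemma admissible_no_longer_arcs_at_both_ends I J K :
  I \in T -> J \in T -> K \in T -> J != I -> K != I -> J.1 = I.1 -> K.2 = I.2 ->
  (#|arc_set I| <= #|arc_set J|)%N -> (#|arc_set I| <= #|arc_set K|)%N -> False.
Proof.
case: I J K => a b [a' c] [d b'] IT JT KT nJI nKI /= ea eb IJ IK; subst a' b'.
have nab := admissible_arc IT; have nac := admissible_arc JT.
have ndb := admissible_arc KT; rewrite /= in nab nac ndb.
have nbc : b != c by apply: contraNneq nJI => <-.
have nda : d != a by apply: contraNneq nKI => ->.
have nJK : (a, c) != (d, b) by apply: contraNneq nda => -[->].
have sub_IJ : arc_set (a, b) \proper arc_set (a, c).
  apply: compatible_arcs_longer IJ; last exact: source_in_arc.
  - by apply: admissible_compatible; rewrite // eq_sym.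
  - exact: source_in_arc.
have sub_IK : arc_set (a, b) \proper arc_set (d, b).
  apply: compatible_arcs_longer IK; last exact: pred_sink_in_arc.
  - by apply: admissible_compatible; rewrite // eq_sym.
  - exact: pred_sink_in_arc.
have aK : a \in arc_vertices d b := subsetP (proper_sub sub_IK) _ (source_in_arc nab).
have [sub_JK | sub_KJ] :=
  compatible_arcs_nested (admissible_compatible JT KT nJK) (source_in_arc nac) aK.
- have bJ : b \in arc_vertices a c.
    apply: arc_succ_closed nbc _.
    exact: (subsetP (proper_sub sub_IJ) _ (pred_sink_in_arc nab)).
  have := subsetP (proper_sub sub_JK) _ bJ.
  by rewrite /arc_set /= (negPf (sink_notin_arc _ _)).
- have := subsetP (proper_sub sub_KJ) _ (arc_pred_closed nda aK).
  by rewrite /arc_set /= (negPf (pred_source_notin_arc nac)).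
Qed.

Lemma admissible_minimal_arc_end_unique (S : {set 'I_n * 'I_n}) I :
  S \subset T -> I \in S ->
  (forall J, J \in S -> #|arc_set I| <= #|arc_set J|)%N ->
  (forall J, J \in S -> J.1 = I.1 -> J = I) \/
  (forall K, K \in S -> K.2 = I.2 -> K = I).
Proof.
move=> /subsetP sST IS Imin.
case: (boolP [forall J in S, (J.1 == I.1) ==> (J == I)]) => [/'forall_implyP src | ].
  by left=> J JS e; apply/eqP; move/implyP: (src J JS); apply; apply/eqP.
rewrite negb_forall_in => /existsP[J /andP[JS]].
rewrite negb_imply => /andP[/eqP eJ nJI].
right=> K KS eK; apply/eqP; apply/negP => /negP nKI.
exact: (admissible_no_longer_arcs_at_both_ends (sST _ IS) (sST _ JS) (sST _ KS)
  nJI nKI eJ eK (Imin _ JS) (Imin _ KS)).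
Qed.

End Admissible.

End CircularArcs.

Local Open Scope ring_scope.

Section ArcVectors.
Variables (R : realFieldType) (n : nat).
Implicit Types (w : 'I_n -> R) (x y v : 'rV[R]_n) (J : 'I_n * 'I_n).
Implicit Types (T : {set 'I_n * 'I_n}) (c : 'I_n * 'I_n -> R).

Definition lform w y : R := \sum_k w k * y 0 k.

Lemma lformDZ w x v d : lform w (x + d *: v) = lform w x + d * lform w v.
Proof.
rewrite /lform mulr_sumr -big_split.
by apply: eq_bigr => k _; rewrite !mxE mulrDr mulrCA.
Qed.

Lemma lform_combination (I : finType) (A : {set I}) (c : I -> R) (v : I -> 'rV[R]_n) w :
  lform w (\sum_(i in A) c i *: v i) = \sum_(i in A) c i * lform w (v i).
Proof.
rewrite /lform; under eq_bigr do rewrite summxE mulr_sumr.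
rewrite exchange_big; apply: eq_bigr => i _; rewrite mulr_sumr.
by apply: eq_bigr => k _; rewrite mxE mulrCA.
Qed.

Lemma lform_arcvec w J : lform w (arcvec R J) = w J.1 - w J.2.
Proof.
have sum_delta a : \sum_k w k * (k == a)%:R = w a.
  by rewrite (bigD1 a) //= eqxx mulr1 big1 ?addr0 // => k /negPf ->; rewrite mulr0.
by rewrite /lform; under eq_bigr do rewrite mxE mulrBr; rewrite sumrB !sum_delta.
Qed.

Lemma H0E x : H0 x = (lform (fun=> 1) x = 0).
Proof. by rewrite /H0 /lform; under [in RHS]eq_bigr do rewrite mul1r. Qed.

Lemma H0_arcvec J : H0 (arcvec R J).
Proof. by rewrite H0E lform_arcvec subrr. Qed.

Lemma H0_arc_combination (A : {set 'I_n * 'I_n}) c :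
  H0 (\sum_(J in A) c J *: arcvec R J).
Proof.
by rewrite H0E lform_combination big1 // => J _; rewrite lform_arcvec subrr mulr0.
Qed.

Lemma arcvec_coord_norm J k : `|arcvec R J 0 k| <= 1.
Proof.
rewrite mxE; case: (k == J.1); case: (k == J.2);
  by rewrite ?subrr ?subr0 ?sub0r ?normrN ?normr0 ?normr1.
Qed.

Lemma rel_closure_mem (P : 'rV[R]_n -> Prop) x : H0 x -> P x -> rel_closure P x.
Proof.
by move=> Hx Px; split=> // eps eps0; exists x; split=> // k; rewrite subrr normr0.
Qed.

Lemma lform_max_not_rel_interior (P : 'rV[R]_n -> Prop) w m x v :
  (forall y, P y -> lform w y <= m) -> lform w x = m ->
  H0 v -> (forall k, `|v 0 k| <= 1) -> 0 < lform w v -> ~ rel_interior P x.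
Proof.
move=> Pm xm Hv v1 wv [Hx [eps eps0 Px_near]].
have eps2 : 0 < eps / 2 by rewrite divr_gt0.
set y := x + eps / 2 *: v.
have Hy : H0 y by move: Hx Hv; rewrite !H0E /y lformDZ => -> ->; rewrite mulr0 addr0.
have y_near k : `|y 0 k - x 0 k| < eps.
  rewrite /y !mxE addrC addKr normrM gtr0_norm //.
  by apply: le_lt_trans (ler_wpM2l (ltW eps2) (v1 k)) _; rewrite mulr1; lra.
have := Pm y (Px_near y Hy y_near); rewrite /y lformDZ xm.
have : 0 < eps / 2 * lform w v by rewrite mulr_gt0.
lra.
Qed.

Lemma sum_restrict (I : finType) (V : nmodType) (A B : {set I}) (F : I -> V) :
  A \subset B -> \sum_(i in B) (if i \in A then F i else 0) = \sum_(i in A) F i.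
Proof.
move=> sAB; rewrite -big_mkcondr; apply: eq_bigl => i.
by case: (boolP (i \in A)) => iA; rewrite ?andbF ?andbT // (subsetP sAB).
Qed.

Lemma conv_subset (I : finType) (A B : {set I}) (v : I -> 'rV[R]_n) x :
  A \subset B -> conv A v x -> conv B v x.
Proof.
move=> sAB [c [[c0 c1] ->]].
exists (fun i => if i \in A then c i else 0); split; first split.
- by move=> i _; case: ifP => // /c0.
- by rewrite sum_restrict.
- rewrite -(sum_restrict (fun i => c i *: v i) sAB).
  by apply: eq_bigr => i _; case: ifP; rewrite ?scale0r.
Qed.

Lemma Root_lform_le w y : (forall k, `|w k| <= 1) -> Root y -> lform w y <= 2.
Proof.
move=> w1 [c [[c0 c1] ->]]; rewrite lform_combination.
apply: le_trans (_ : _ <= \sum_(J in [set I | I.1 != I.2]) c J * 2) _.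
  apply: ler_sum => J JA; rewrite lform_arcvec; apply: ler_wpM2l; first exact: c0.
  by move: (w1 J.1) (w1 J.2); rewrite !ler_norml => /andP[? ?] /andP[? ?]; lra.
by rewrite -mulr_suml c1 mul1r.
Qed.

Definition source_sign T k : R := if [exists J in T, J.1 == k] then 1 else -1.

Lemma source_sign_norm T k : `|source_sign T k| <= 1.
Proof. by rewrite /source_sign; case: ifP; rewrite ?normrN normr1. Qed.

Lemma lform_source_sign_arcvec T J : admissible T -> J \in T ->
  lform (source_sign T) (arcvec R J) = 2.
Proof.
move=> admT JT; rewrite lform_arcvec /source_sign.
case: existsP => [_ | []]; last by exists J; rewrite JT eqxx.
case: existsP => [[K /andP[KT /eqP eK]] | _]; last by rewrite opprK.
by move: (admissible_sink_neq_source admT JT KT); rewrite eK eqxx.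
Qed.

Lemma admissible_combination_rel_boundary T c : admissible T -> barycentric T c ->
  rel_boundary (@Root R n) (\sum_(J in T) c J *: arcvec R J).
Proof.
move=> admT [c0 c1].
have arcsT : T \subset [set I | I.1 != I.2].
  by apply/subsetP => J JT; rewrite inE (admissible_arc admT JT).
split.
  apply: rel_closure_mem; first exact: H0_arc_combination.
  by apply: conv_subset arcsT _; exists c.
have [T0 | [I IT]] := set_0Vmem T.
  by move: c1; rewrite T0 big_set0 => /eqP; rewrite eq_sym oner_eq0.
apply: (@lform_max_not_rel_interior _ (source_sign T) 2 _ (arcvec R I)).
- by move=> y; apply: Root_lform_le => k; apply: source_sign_norm.
- rewrite lform_combination (eq_bigr (fun J => c J * 2)) => [|J JT].
    by rewrite -mulr_suml c1 mul1r.
  by rewrite lform_source_sign_arcvec.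
- exact: H0_arcvec.
- exact: arcvec_coord_norm.
- by rewrite lform_source_sign_arcvec.
Qed.

Lemma arc_combination_coord (A : {set 'I_n * 'I_n}) c k :
  (\sum_(J in A) c J *: arcvec R J) 0 k =
  \sum_(J in A) c J * ((k == J.1)%:R - (k == J.2)%:R).
Proof. by rewrite summxE; apply: eq_bigr => J _; rewrite !mxE. Qed.

Lemma admissible_combination_source_coord T c I : admissible T -> I \in T ->
  (forall J, J \in T -> c J != 0 -> J.1 = I.1 -> J = I) ->
  (\sum_(J in T) c J *: arcvec R J) 0 I.1 = c I.
Proof.
move=> admT IT src; rewrite arc_combination_coord (bigD1 I) //= eqxx.
rewrite eq_sym (negPf (admissible_sink_neq_source admT IT IT)) subr0 mulr1.
rewrite big1 ?addr0 // => J /andP[JT nJI].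
rewrite (eq_sym I.1 J.2) (negPf (admissible_sink_neq_source admT JT IT)) subr0.
have [-> | cJ] := eqVneq (c J) 0; first by rewrite mul0r.
have [eJ | _] := eqVneq I.1 J.1; last by rewrite mulr0.
by move: nJI; rewrite (src J JT cJ (esym eJ)) eqxx.
Qed.

Lemma admissible_combination_sink_coord T c I : admissible T -> I \in T ->
  (forall J, J \in T -> c J != 0 -> J.2 = I.2 -> J = I) ->
  (\sum_(J in T) c J *: arcvec R J) 0 I.2 = - c I.
Proof.
move=> admT IT snk; rewrite arc_combination_coord (bigD1 I) //= eqxx.
rewrite (negPf (admissible_sink_neq_source admT IT IT)) sub0r mulrN1.
rewrite big1 ?addr0 // => J /andP[JT nJI].
rewrite (negPf (admissible_sink_neq_source admT IT JT)) sub0r.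
have [-> | cJ] := eqVneq (c J) 0; first by rewrite mul0r.
have [eJ | _] := eqVneq I.2 J.2; last by rewrite oppr0 mulr0.
by move: nJI; rewrite (snk J JT cJ (esym eJ)) eqxx.
Qed.

Lemma admissible_arcvec_free T c : admissible T ->
  \sum_(J in T) c J *: arcvec R J = 0 -> forall I, I \in T -> c I = 0.
Proof.
move=> admT comb0 I0 I0T; apply/eqP/negP => /negP cI0.
set S := [set J in T | c J != 0].
have sST : S \subset T by apply/subsetP => J; rewrite inE => /andP[].
have I0S : I0 \in S by rewrite inE I0T.
case: (arg_minnP (fun J => #|arc_set J|) I0S) => I IS' Imin.
have IS : I \in S := IS'.
have /andP[IT cI] : (I \in T) && (c I != 0) by move: IS; rewrite /S inE.
have [src | snk] := admissible_minimal_arc_end_unique admT sST IS Imin.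
- move: cI; rewrite -(admissible_combination_source_coord admT IT).
    by rewrite comb0 mxE eqxx.
  by move=> J JT cJ; apply: src; rewrite /S inE JT.
- move: cI; rewrite -oppr_eq0 -(admissible_combination_sink_coord admT IT).
    by rewrite comb0 mxE eqxx.
  by move=> J JT cJ; apply: snk; rewrite /S inE JT.
Qed.

End ArcVectors.

Theorem mainTheorem4 (R : realFieldType) (n : nat) (T : {set 'I_n * 'I_n}) :
  (3 <= n)%N -> admissible T ->
  [/\ affinely_independent T (@arcvec R n),
      (forall x, conv T (@arcvec R n) x -> rel_boundary (@Root R n) x),
      (forall c1 c2 : 'I_n * 'I_n -> R, barycentric T c1 -> barycentric T c2 ->
         \sum_(I in T) c1 I *: arcvec R I = \sum_(I in T) c2 I *: arcvec R I ->
         forall I, I \in T -> c1 I = c2 I)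
    & (forall c : 'I_n * 'I_n -> R, barycentric T c ->
         rel_boundary (@Root R n) (\sum_(I in T) c I *: arcvec R I))].
Proof.
move=> _ admT; split.
- by move=> c _ comb0; exact: admissible_arcvec_free.
- by move=> x [c [bc ->]]; exact: admissible_combination_rel_boundary.
- move=> c1 c2 _ _ e I IT; apply/eqP; rewrite -subr_eq0; apply/eqP.
  apply: (admissible_arcvec_free (c := fun J => c1 J - c2 J)) IT => //.
  by under eq_bigr do rewrite scalerBl; rewrite sumrB e subrr.
- by move=> c; exact: admissible_combination_rel_boundary.
Qed.
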